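(* Let $M$ and $\tilde M$ be Markov decision processes over the same action space $\mathcal{A}$, with state spaces $\mathcal{S}$ and $\tilde{\mathcal{S}}=(\mathcal{S}\setminus\{s_0\})\cup\{s_0^1,s_0^2\}$ respectively, where $s_0^1,s_0^2$ form a split of the state $s_0\in\mathcal{S}$. Let $\pi^*:\mathcal{S}\to\mathcal{A}$ be an optimal policy in $M$. Then there exists a policy $\tilde\pi:\tilde{\mathcal{S}}\to\mathcal{A}$ with $\tilde\pi(s_0^1)=\tilde\pi(s_0^2)=\pi^*(s_0)$ such that $V^{\tilde\pi}_{\tilde M}=V^{\pi^*}_M$, and for every policy $\pi'\neq\tilde\pi$ on $\tilde{\mathcal{S}}$ we have $V^{\pi'}_{\tilde M}\le V^{\tilde\pi}_{\tilde M}$.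
   Context: $\tilde M$ being obtained from $M$ by splitting $s_0$ into $s_0^1,s_0^2$ means: writing $\phi:\tilde{\mathcal{S}}\to\mathcal{S}$ for the map sending $s_0^1,s_0^2$ to $s_0$ and fixing all other states, $\tilde M$ is itself Markovian and for every $\tilde s\in\tilde{\mathcal{S}}$ and $a\in\mathcal{A}$ the reward satisfies $\tilde R(\tilde s,a)=R(\phi(\tilde s),a)$, and the transition probabilities satisfy $\tilde P(s'\mid\tilde s,a)=P(s'\mid\phi(\tilde s),a)$ for $s'\neq s_0$ and $\tilde P(s_0^1\mid\tilde s,a)+\tilde P(s_0^2\mid\tilde s,a)=P(s_0\mid\phi(\tilde s),a)$, with $\tilde P(\cdot\mid s_0^1,a)=\tilde P(\cdot\mid s_0^2,a)$ and $\tilde R(s_0^1,a)=\tilde R(s_0^2,a)$ (the initial state distribution is split analogously). $V^{\pi}_M$ denotes the value (expected discounted return, discount $\gamma$) of policy $\pi$ in MDP $M$. *)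

From HB Require Import structures.
From mathcomp Require Import all_boot all_order all_algebra.
From mathcomp Require Import all_classical all_reals.
From mathcomp Require Import topology normedtype sequences.
Set Implicit Arguments. Unset Strict Implicit. Unset Printing Implicit Defensive.
Import Order.TTheory GRing.Theory Num.Theory.
Import numFieldNormedType.Exports.
Local Open Scope ring_scope.

(* A finite discounted MDP: transition kernel P s a s' = P(s' | s, a),
   reward r s a, initial state distribution mu. *)
Record MDP (S A : finType) (R : realType) := mkMDP {
  trans : S -> A -> S -> R;
  rew   : S -> A -> R;
  init  : S -> R }.

Definition is_distr (S : finType) (R : realType) (d : S -> R) : Prop :=
  (forall s, 0 <= d s) /\ \sum_(s : S) d s = 1.

Definition is_MDP (S A : finType) (R : realType) (M : MDP S A R) : Prop :=
  is_distr (init M) /\ forall s a, is_distr (trans M s a).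

Fixpoint state_dist (S A : finType) (R : realType) (M : MDP S A R)
  (pi : S -> A) (t : nat) : S -> R :=
  match t with
  | 0 => init M
  | t.+1 => fun s' => \sum_(s : S) state_dist M pi t s * trans M s (pi s) s'
  end.

Definition value (S A : finType) (R : realType) (gamma : R) (M : MDP S A R)
  (pi : S -> A) : R :=
  limn (fun n : nat => \sum_(0 <= t < n)
    gamma ^+ t * \sum_(s : S) state_dist M pi t s * rew M s (pi s)).

Definition optimal_policy (S A : finType) (R : realType) (gamma : R)
  (M : MDP S A R) (pi : S -> A) : Prop :=
  forall pi' : S -> A, value gamma M pi' <= value gamma M pi.

(* phi : T -> S identifies T with (S \ {s0}) ∪ {t1, t2}, t1 t2 the split of s0. *)
Definition split_states (S T : finType) (phi : T -> S) (s0 : S) (t1 t2 : T) : Prop :=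
  [/\ t1 != t2,
      (forall x, phi x = s0 <-> (x = t1 \/ x = t2)),
      (forall x y, phi x != s0 -> phi y != s0 -> phi x = phi y -> x = y) &
      (forall s, exists x, phi x = s)].

Definition split_MDP (S T A : finType) (R : realType) (M : MDP S A R)
  (Mt : MDP T A R) (phi : T -> S) (s0 : S) (t1 t2 : T) : Prop :=
  split_states phi s0 t1 t2 /\
  is_MDP Mt /\
  (forall x a, rew Mt x a = rew M (phi x) a) /\
  (forall x a y, phi y != s0 -> trans Mt x a y = trans M (phi x) a (phi y)) /\
  (forall x a, trans Mt x a t1 + trans Mt x a t2 = trans M (phi x) a s0) /\
  (forall a, trans Mt t1 a = trans Mt t2 a) /\
  (forall a, rew Mt t1 a = rew Mt t2 a) /\
  (forall y, phi y != s0 -> init Mt y = init M (phi y)) /\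
  init Mt t1 + init Mt t2 = init M s0.

From HB Require Import structures.
From mathcomp Require Import all_boot all_order all_algebra.
From mathcomp Require Import all_classical all_reals.
From mathcomp Require Import topology normedtype sequences.
Set Implicit Arguments. Unset Strict Implicit. Unset Printing Implicit Defensive.
Import Order.TTheory GRing.Theory Num.Theory.
Import numFieldNormedType.Exports.
Local Open Scope ring_scope.
Local Open Scope classical_set_scope.

(* The value of a policy is [init . V], where [V] is the fixed point of the
   Bellman equation [V = r + gamma P V] of the induced Markov chain; by a
   discrete maximum principle [V] lies below every supersolution and above
   every subsolution of that equation.  A policy maximising the total state
   value cannot be improved by changing its action at a single state, so its
   state value [U] is a supersolution for every action.  (The given optimal
   policy need not have this property: it is only optimal for the initial
   distribution.)  Split states share rewards and transitions, so [U \o phi]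
   is a supersolution for every policy on the split MDP, whose value is thus
   at most [init . U], hence at most the optimal value.  Conversely the
   lifted policy [pi* \o phi] has state distributions that aggregate to those
   of [pi*], so it attains that value. *)

Lemma exchange_sum_mul (R : pzSemiRingType) (X Y : finType)
    (a : X -> R) (b : X -> Y -> R) (c : Y -> R) :
  \sum_y (\sum_x a x * b x y) * c y = \sum_x a x * \sum_y b x y * c y.
Proof.
under eq_bigr do rewrite mulr_suml.
rewrite exchange_big /=; apply: eq_bigr => x _; rewrite mulr_sumr.
by apply: eq_bigr => y _; rewrite mulrA.
Qed.

Section DiscountedChain.
Variables (R : realType) (X : finType) (g : R) (P : X -> X -> R) (r : X -> R).

Fixpoint horizon_value (n : nat) (x : X) : R :=
  if n is n.+1 then r x + g * \sum_y P x y * horizon_value n y else 0.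

Fixpoint marginal (d : X -> R) (t : nat) (y : X) : R :=
  if t is t.+1 then \sum_x marginal d t x * P x y else d y.

Lemma marginalS d t : marginal d t.+1 = marginal (marginal d 1) t.
Proof.
apply: funext; elim: t => [|t IH] y //.
transitivity (\sum_x marginal d t.+1 x * P x y); first by [].
by apply: eq_bigr => x _; rewrite IH.
Qed.

Lemma discounted_sum_marginal n d :
  \sum_(0 <= t < n) g ^+ t * \sum_x marginal d t x * r x =
  \sum_x d x * horizon_value n x.
Proof.
elim: n d => [|n IH] d.
  by rewrite big_geq // big1 // => x _; rewrite mulr0.
rewrite big_nat_recl //.
under eq_bigr => t _ do rewrite exprS -mulrA marginalS.
rewrite -mulr_sumr IH expr0 mul1r exchange_sum_mul mulr_sumr -big_split /=.
by apply: eq_bigr => x _; rewrite mulrDr mulrCA.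
Qed.

Hypotheses (g_ge0 : 0 <= g) (g_lt1 : g < 1) (P_distr : forall x, is_distr (P x)).

Lemma horizon_value_step t x :
  `|horizon_value t.+1 x - horizon_value t x| <= (\sum_z `|r z|) * g ^+ t.
Proof.
elim: t x => [|t IH] x.
  rewrite expr0 mulr1 /= big1 ?mulr0 ?addr0 ?subr0; last by move=> y _; rewrite mulr0.
  by rewrite (bigD1 x) //= lerDl sumr_ge0.
have -> : horizon_value t.+2 x - horizon_value t.+1 x =
    g * \sum_y P x y * (horizon_value t.+1 y - horizon_value t y).
  rewrite [LHS]/= opprD addrACA subrr add0r -mulrBr -sumrB.
  by congr (_ * _); apply: eq_bigr => y _; rewrite mulrBr.
rewrite normrM ger0_norm // exprS mulrCA; apply: ler_wpM2l => //.
apply: (le_trans (ler_norm_sum _ _ _)).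
have [P_ge0 P_sum1] := P_distr x.
rewrite -[_ * g ^+ t]mul1r -P_sum1 mulr_suml; apply: ler_sum => y _.
by rewrite normrM ger0_norm //; apply: ler_wpM2l.
Qed.

Definition chain_value (x : X) : R := limn (horizon_value ^~ x).

(* The increments are dominated by a convergent geometric series. *)
Lemma horizon_value_cvg x : horizon_value n x @[n --> \oo] --> chain_value x.
Proof.
suff cv : cvgn (horizon_value ^~ x) by exact: cv.
have -> : horizon_value ^~ x =
    series (fun t => horizon_value t.+1 x - horizon_value t x).
  by apply: funext => n; rewrite seriesEnat /= telescope_sumr //= subr0.
apply: normed_cvg; apply: (@series_le_cvg _ _ (geometric (\sum_z `|r z|) g)).
- by move=> n; exact: normr_ge0.
- by move=> n; rewrite /geometric /= mulr_ge0 ?sumr_ge0 ?exprn_ge0.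
- by move=> n; exact: horizon_value_step.
- by apply: is_cvg_geometric_series; rewrite ger0_norm.
Qed.

Lemma chain_value_bellman x :
  chain_value x = r x + g * \sum_y P x y * chain_value y.
Proof.
apply: cvg_lim; first exact: Rhausdorff.
rewrite -(cvg_shiftS (horizon_value ^~ x)).
apply: cvgD; first exact: cvg_cst.
apply: cvgMl_tmp; apply: cvg_big => //; first exact: add_continuous.
by move=> y _; apply: cvgMl_tmp; exact: horizon_value_cvg.
Qed.

Lemma discounted_sum_cvg d :
  limn (fun n => \sum_(0 <= t < n) g ^+ t * \sum_x marginal d t x * r x) =
  \sum_x d x * chain_value x.
Proof.
under eq_fun do rewrite discounted_sum_marginal.
apply: cvg_lim; first exact: Rhausdorff.
apply: cvg_big => //; first exact: add_continuous.
by move=> x _; apply: cvgMl_tmp; exact: horizon_value_cvg.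
Qed.

(* Discrete maximum principle: look at a maximiser of [D]. *)
Lemma bellman_subsolution_le0 (D : X -> R) :
  (forall x, D x <= g * \sum_y P x y * D y) -> forall x, D x <= 0.
Proof.
move=> HD x.
have [m _ Dm_max] := @Order.TotalTheory.arg_maxP _ _ X x xpredT D isT.
have Dm : D m <= g * D m.
  apply: (le_trans (HD m)); apply: ler_wpM2l => //.
  rewrite -[D m]mul1r -(P_distr m).2 mulr_suml.
  by apply: ler_sum => y _; apply: ler_wpM2l; [exact: (P_distr m).1 | exact: Dm_max].
have : (1 - g) * D m <= 0 by rewrite mulrBl mul1r subr_le0.
rewrite pmulr_rle0 ?subr_gt0 // => Dm_le0.
exact: le_trans (Dm_max x isT) Dm_le0.
Qed.

Lemma bellman_defect (W : X -> R) x :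
  r x + g * \sum_y P x y * W y - chain_value x =
  g * \sum_y P x y * (W y - chain_value y).
Proof.
rewrite [chain_value x]chain_value_bellman opprD addrACA subrr add0r -mulrBr -sumrB.
by congr (_ * _); apply: eq_bigr => y _; rewrite mulrBr.
Qed.

Lemma chain_value_ge_subsolution (W : X -> R) :
  (forall x, W x <= r x + g * \sum_y P x y * W y) -> forall x, W x <= chain_value x.
Proof.
move=> HW x; rewrite -subr_le0; move: x; apply: bellman_subsolution_le0 => x.
by rewrite -bellman_defect lerD2r.
Qed.

Lemma chain_value_le_supersolution (W : X -> R) :
  (forall x, r x + g * \sum_y P x y * W y <= W x) -> forall x, chain_value x <= W x.
Proof.
move=> HW x; rewrite -subr_le0; move: x; apply: bellman_subsolution_le0 => x.
have -> : g * \sum_y P x y * (chain_value y - W y) =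
    - (g * \sum_y P x y * (W y - chain_value y)).
  by rewrite -mulrN -sumrN; congr (_ * _); apply: eq_bigr => y _; rewrite -mulrN opprB.
by rewrite -bellman_defect opprB lerD2l lerN2.
Qed.

End DiscountedChain.

Section PolicyValue.
Variables (R : realType) (S A : finType) (gamma : R) (M : MDP S A R).

Definition state_value (pi : S -> A) : S -> R :=
  chain_value gamma (fun s => trans M s (pi s)) (fun s => rew M s (pi s)).

Definition action_value (W : S -> R) (s : S) (a : A) : R :=
  rew M s a + gamma * \sum_s' trans M s a s' * W s'.

Lemma state_dist_marginal pi t :
  state_dist M pi t = marginal (fun s => trans M s (pi s)) (init M) t.
Proof.
apply: funext; elim: t => [|t IH] s' //.
transitivity (\sum_s state_dist M pi t s * trans M s (pi s) s'); first by [].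
by apply: eq_bigr => s _; rewrite IH.
Qed.

Hypotheses (gamma_ge0 : 0 <= gamma) (gamma_lt1 : gamma < 1) (M_MDP : is_MDP M).

Lemma value_state_value pi :
  value gamma M pi = \sum_s init M s * state_value pi s.
Proof.
rewrite /value -discounted_sum_cvg //; last by move=> s; exact: M_MDP.2.
by under eq_fun do under eq_bigr do rewrite state_dist_marginal.
Qed.

Lemma state_value_bellman pi s :
  state_value pi s = action_value (state_value pi) s (pi s).
Proof. by apply: chain_value_bellman => // s'; exact: M_MDP.2. Qed.

Lemma state_value_ge_subsolution pi (W : S -> R) :
  (forall s, W s <= action_value W s (pi s)) -> forall s, W s <= state_value pi s.
Proof. by apply: chain_value_ge_subsolution => // s; exact: M_MDP.2. Qed.

Lemma state_value_improve (pi pi' : S -> A) s :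
  (forall s', s' != s -> pi' s' = pi s') ->
  state_value pi s < action_value (state_value pi) s (pi' s) ->
  (forall s', state_value pi s' <= state_value pi' s') /\
  state_value pi s < state_value pi' s.
Proof.
move=> pi'E improves.
have le_pi' : forall s', state_value pi s' <= state_value pi' s'.
  apply: state_value_ge_subsolution => s'.
  case: (eqVneq s' s) => [->|/pi'E ->]; [exact: ltW | by rewrite -state_value_bellman].
split=> //; apply: (lt_le_trans improves).
rewrite [X in _ <= X]state_value_bellman lerD2l; apply: ler_wpM2l => //.
by apply: ler_sum => s' _; apply: ler_wpM2l => //; exact: (M_MDP.2 s _).1.
Qed.

Lemma exists_bellman_optimal_policy (pi0 : S -> A) :
  exists pi, forall s a, action_value (state_value pi) s a <= state_value pi s.
Proof.
pose total (f : {ffun S -> A}) := \sum_s state_value f s.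
have [pi _ pi_max] :=
  @Order.TotalTheory.arg_maxP _ _ _ [ffun s => pi0 s] xpredT total isT.
exists pi => s a; rewrite leNgt; apply/negP => improves.
pose pi' := [ffun s' => if s' == s then a else pi s'].
have pi'E s' : s' != s -> pi' s' = pi s' by rewrite ffunE => /negbTE ->.
have pi's : pi' s = a by rewrite ffunE eqxx.
rewrite -pi's in improves.
have [le_pi' lt_pi'] := state_value_improve pi'E improves.
have := pi_max pi' isT; apply/negP; rewrite -ltNge /total.
rewrite (bigD1 s) //= [X in _ < X](bigD1 s) //=.
by apply: ltr_leD => //; apply: ler_sum => s' _; exact: le_pi'.
Qed.

End PolicyValue.

Lemma split_states_sum (R : realType) (S T : finType) (phi : T -> S) s0 t1 t2
    (dT : T -> R) (dS : S -> R) (f : S -> R) :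
  split_states phi s0 t1 t2 ->
  (forall y, phi y != s0 -> dT y = dS (phi y)) -> dT t1 + dT t2 = dS s0 ->
  \sum_y dT y * f (phi y) = \sum_s dS s * f s.
Proof.
case=> t12 phiE phi_inj phi_surj dTE dT12.
have phi1 : phi t1 = s0 by apply/phiE; left.
have phi2 : phi t2 = s0 by apply/phiE; right.
rewrite (partition_big phi xpredT) //=; apply: eq_bigr => s _.
case: (eqVneq s s0) => [->|s_neq].
  rewrite (bigD1 t1) /=; last by rewrite phi1 eqxx.
  rewrite (big_pred1 t2); last first.
    move=> y /=; apply/idP/idP; first by case/andP=> /eqP /phiE [->|->]; rewrite ?eqxx.
    by move/eqP->; rewrite phi2 eqxx eq_sym t12.
  by rewrite phi1 phi2 -mulrDl dT12.
have [y phiy] := phi_surj s.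
rewrite (big_pred1 y); first by rewrite dTE phiy.
move=> z /=; apply/idP/idP; last by move/eqP->; rewrite phiy.
by move/eqP=> phiz; apply/eqP; apply: phi_inj; rewrite ?phiz ?phiy.
Qed.

Section SplitMDP.
Variables (R : realType) (S T A : finType) (gamma : R).
Variables (M : MDP S A R) (Mt : MDP T A R) (phi : T -> S) (s0 : S) (t1 t2 : T).
Hypothesis Mt_split : split_MDP M Mt phi s0 t1 t2.

Lemma split_trans_sum x a (f : S -> R) :
  \sum_y trans Mt x a y * f (phi y) = \sum_s trans M (phi x) a s * f s.
Proof.
have [split_S [_ [_ [transE [trans12 _]]]]] := Mt_split.
exact: split_states_sum split_S (transE x a) (trans12 x a).
Qed.

Lemma state_dist_lift (pi : S -> A) t (f : S -> R) :
  \sum_y state_dist Mt (pi \o phi) t y * f (phi y) = \sum_s state_dist M pi t s * f s.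
Proof.
have [split_S [_ [_ [_ [_ [_ [_ [initE init12]]]]]]]] := Mt_split.
elim: t f => [|t IH] f; first exact: split_states_sum split_S initE init12.
rewrite !exchange_sum_mul -IH; apply: eq_bigr => y _.
by rewrite split_trans_sum.
Qed.

Lemma value_lift (pi : S -> A) : value gamma Mt (pi \o phi) = value gamma M pi.
Proof.
have [_ [_ [rewE _]]] := Mt_split.
rewrite /value; congr (limn _); apply: funext => n; apply: eq_bigr => t _; congr (_ * _).
rewrite -state_dist_lift; by apply: eq_bigr => y _; rewrite rewE.
Qed.

Lemma action_value_lift (W : S -> R) x a :
  action_value gamma Mt (W \o phi) x a = action_value gamma M W (phi x) a.
Proof.
have [_ [_ [rewE _]]] := Mt_split.
by rewrite /action_value rewE split_trans_sum.
Qed.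

Hypotheses (gamma_ge0 : 0 <= gamma) (gamma_lt1 : gamma < 1).

Lemma value_lift_le_supersolution (W : S -> R) :
  (forall s a, action_value gamma M W s a <= W s) ->
  forall pi : T -> A, value gamma Mt pi <= \sum_s init M s * W s.
Proof.
have [split_S [Mt_MDP [_ [_ [_ [_ [_ [initE init12]]]]]]]] := Mt_split.
move=> W_super pi; rewrite value_state_value //.
rewrite -(split_states_sum _ split_S initE init12); apply: ler_sum => y _.
apply: ler_wpM2l; first exact: Mt_MDP.1.1.
apply: (chain_value_le_supersolution gamma_ge0 gamma_lt1
  (fun x => Mt_MDP.2 x (pi x)) (W := W \o phi)) => x.
have := W_super (phi x) (pi x); by rewrite -action_value_lift.
Qed.

End SplitMDP.

Theorem theorem1 (R : realType) (S T A : finType) (gamma : R)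
  (M : MDP S A R) (Mt : MDP T A R) (phi : T -> S) (s0 : S) (t1 t2 : T)
  (pi_star : S -> A) :
  0 <= gamma -> gamma < 1 ->
  is_MDP M ->
  split_MDP M Mt phi s0 t1 t2 ->
  optimal_policy gamma M pi_star ->
  exists pit : T -> A,
    [/\ pit t1 = pi_star s0, pit t2 = pi_star s0,
        value gamma Mt pit = value gamma M pi_star &
        forall pi' : T -> A, pi' <> pit -> value gamma Mt pi' <= value gamma Mt pit].
Proof.
move=> gamma_ge0 gamma_lt1 M_MDP Mt_split pi_star_opt.
have [[_ phiE _ _] _] := Mt_split.
have [pi pi_opt] := exists_bellman_optimal_policy gamma_ge0 gamma_lt1 M_MDP pi_star.
exists (pi_star \o phi); split.
- by rewrite /= (phiE t1).2 //; left.
- by rewrite /= (phiE t2).2 //; right.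
- exact: (value_lift gamma Mt_split pi_star).
move=> pi' _; rewrite (value_lift gamma Mt_split).
apply: le_trans (pi_star_opt pi).
rewrite (value_state_value gamma_ge0 gamma_lt1 M_MDP).
exact: (value_lift_le_supersolution Mt_split gamma_ge0 gamma_lt1 pi_opt).
Qed.
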